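(* Let $M$ be an $n\times n$ non-singular, aperiodic, odd-block matrix with nonnegative integer entries, and let $h$ be any piecewise-linear map realizing $M$. Then there exists an aperiodic odd-block matrix $N$ with entries only in $\{0,1\}$ such that $h$ is a piecewise-linear map realizing $N$ (i.e. $h_N=h_M=h$), and the leading eigenvalue of $N$ equals the leading eigenvalue of $M$.
   Context: An $m\times m$ nonnegative integer matrix $A$ is odd-block if (i) in each column of $A$ the non-zero entries form one consecutive block, and (ii) there is a map $\phi:\{0,1,\dots,m\}\to\{0,1,\dots,m\}$ such that $A_{ij}$ is odd if and only if $\min\{\phi(j-1),\phi(j)\}<i\le\max\{\phi(j-1),\phi(j)\}$. A nonnegative matrix is aperiodic if some power of it has all entries positive. For an aperiodic nonnegative integer $m\times m$ matrix $A$ with leading (Perron) eigenvalue $\lambda$, let $v$ be the positive eigenvector of $A^T$ for $\lambda$ normalized to have $L^1$-norm $1$, set $x_0=0$ and $x_i=x_{i-1}+v_i$ (so $x_m=1$), and $I_i=[x_{i-1},x_i]$. A piecewise-linear map realizing $A$ (denoted $h_A$) is a continuous map $h:[0,1]\to[0,1]$ such that for each $j$ there is a subdivision $x_{j-1}=a_0<a_1<\dots<a_r=x_j$ with $h$ affine of slope $\pm\lambda$ on each $[a_{k-1},a_k]$ and mapping it onto some interval $I_i$, and for every $i$ the number of $k$ with $h([a_{k-1},a_k])=I_i$ equals $A_{ij}$. Such a map need not be unique when $A$ has entries larger than $1$. *)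

From HB Require Import structures.
From mathcomp Require Import all_boot all_order all_algebra.
From mathcomp Require Import all_classical all_reals all_analysis.
From mathcomp Require Import complex.

Set Implicit Arguments.
Unset Strict Implicit.
Unset Printing Implicit Defensive.

Import Order.TTheory GRing.Theory Num.Theory.
Import numFieldNormedType.Exports.
Local Open Scope ring_scope.
Local Open Scope classical_set_scope.

(* Matrices with nonnegative integer entries are 'M[nat]_m.
   Paper indices 1..m correspond to 0-based ordinals 0..m-1. *)

(* Odd-block matrix. (i) in each column the non-zero entries form one
   consecutive block; (ii) there is phi : {0..m} -> {0..m} such that
   A_ij is odd iff min(phi(j-1),phi(j)) < i <= max(phi(j-1),phi(j))
   (1-based i, j; here i, j are 0-based, so paper i = i.+1, paper j = j.+1). *)
Definition odd_block (m : nat) (A : 'M[nat]_m) : Prop :=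
  (forall (j i1 i i2 : 'I_m), (i1 <= i <= i2)%N ->
      A i1 j != 0%N -> A i2 j != 0%N -> A i j != 0%N) /\
  exists phi : 'I_m.+1 -> 'I_m.+1, forall (i j : 'I_m),
    odd (A i j) =
    (minn (phi (inord j)) (phi (inord j.+1)) < i.+1
       <= maxn (phi (inord j)) (phi (inord j.+1)))%N.

Definition aperiodic (m : nat) (A : 'M[nat]_m) : Prop :=
  exists k : nat, forall i j : 'I_m, (0 < (A ^+ k) i j)%N.

Definition nonsingular (m : nat) (A : 'M[nat]_m) : Prop :=
  \det (map_mx (fun a : nat => a%:Z) A) != 0.

Definition leading_eigenvalue (R : realType) (m : nat) (A : 'M[nat]_m)
    (lam : R) : Prop :=
  eigenvalue (map_mx (fun a : nat => (a%:R : R[i])) A) (lam%:C)%C /\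
  forall mu : R[i], eigenvalue (map_mx (fun a : nat => (a%:R : R[i])) A) mu ->
    `|mu| <= (lam%:C)%C.

(* h is a piecewise-linear map realizing A.  v is the positive eigenvector
   of A^T for lam (a row vector with v *m A = lam v), L^1-normalized;
   x k = v_1 + ... + v_k (so x 0 = 0, x m = 1), and the 0-based interval
   I_i is [x i, x i.+1]. *)
Definition realizes (R : realType) (m : nat) (A : 'M[nat]_m) (h : R -> R)
    : Prop :=
  exists (lam : R) (v : 'rV[R]_m),
    leading_eigenvalue A lam /\
    (forall i : 'I_m, 0 < v 0 i) /\
    v *m map_mx (fun a : nat => (a%:R : R)) A = lam *: v /\
    \sum_(i < m) v 0 i = 1 /\
    {within `[0%R, 1%R], continuous h} /\
    (forall t : R, 0 <= t <= 1 -> 0 <= h t <= 1) /\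
    let x := fun k : nat => \sum_(i < m | (i < k)%N) v 0 i in
    forall j : 'I_m,
      exists (r : nat) (a : nat -> R) (tgt : 'I_r -> 'I_m),
        a 0%N = x j /\ a r = x j.+1 /\
        (forall k : nat, (k < r)%N -> a k < a k.+1) /\
        (forall k : 'I_r, exists s c : R,
            (s = lam \/ s = - lam) /\
            (forall t : R, a k <= t <= a k.+1 -> h t = s * t + c) /\
            h @` `[a k, a k.+1] = `[x (tgt k), x (tgt k).+1]) /\
        (forall i : 'I_m, #|[pred k : 'I_r | tgt k == i]| = A i j).

(* Concatenating the subdivisions of all columns cuts [0, 1] into k pieces;
   on each piece h is affine of slope +-lam and maps it onto some I_i.  Let B
   (k x n) record the interval I_j containing each piece and C (n x k) the
   interval covered by each piece.  Counting pieces gives M = C B, while the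
   0/1 matrix N := B C has N_qp = 1 iff piece q lies in the interval covered by
   piece p.  Hence N^(K+1) = B M^K C is positive whenever M^K is, and B C and
   C B have the same nonzero eigenvalues.  The column p of N is the block of
   pieces inside one interval, so N is odd-block, phi sending each knot to the
   knot h maps it to.  The piece lengths form a positive left lam-eigenvector
   of N, so the new intervals are the pieces themselves, and h realizes N by
   pulling back, through the affine branch on each piece, the subdivision of
   the interval it covers. *)

From HB Require Import structures.
From mathcomp Require Import all_boot all_order all_algebra.
From mathcomp Require Import all_classical all_reals all_analysis.
From mathcomp Require Import complex.
From mathcomp Require Import ring lra zify.

Set Implicit Arguments.
Unset Strict Implicit.
Unset Printing Implicit Defensive.

Import Order.TTheory GRing.Theory Num.Theory.
Import numFieldNormedType.Exports.
Local Open Scope ring_scope.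
Local Open Scope classical_set_scope.

Section AffineBranches.
Variable R : realType.
Implicit Types (h : R -> R) (al be s c u w : R).

Lemma affine_image_itv h al be s c : al <= be -> s != 0 ->
  (forall t, al <= t <= be -> h t = s * t + c) ->
  h @` `[al, be] = `[Num.min (h al) (h be), Num.max (h al) (h be)].
Proof.
move=> al_be s_neq0 hE.
rewrite !hE ?lexx ?al_be //.
have [u [w [-> [-> [img_in img_sub]]]]] : exists u w,
    Num.min (s * al + c) (s * be + c) = u /\ Num.max (s * al + c) (s * be + c) = w /\
    (forall t, al <= t <= be -> u <= s * t + c <= w) /\
    (forall t, u <= s * t + c <= w -> al <= t <= be).
  case: (ltrgtP s 0) s_neq0 => // s_sgn _.
  - have le_ba : s * be + c <= s * al + c by nra.
    exists (s * be + c), (s * al + c); rewrite (min_idPr le_ba) (max_idPl le_ba).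
    do 2![split; first done]; split => t /andP[? ?]; apply/andP; split; nra.
  - have le_ab : s * al + c <= s * be + c by nra.
    exists (s * al + c), (s * be + c); rewrite (min_idPl le_ab) (max_idPr le_ab).
    do 2![split; first done]; split => t /andP[? ?]; apply/andP; split; nra.
apply/seteqP; split => [y [t] | y]; rewrite /= in_itv /=.
  by move=> t_ab <-; rewrite in_itv /= hE // img_in.
move=> y_uw; have s_inv : s * ((y - c) / s) + c = y by field.
have t_ab : al <= (y - c) / s <= be by apply: img_sub; rewrite s_inv.
by exists ((y - c) / s); rewrite ?hE //= in_itv.
Qed.

Lemma itv_cc_inj (p q u w : R) : p <= q -> `[p, q] = `[u, w] :> set R ->
  p = u /\ q = w.
Proof.
move=> pq E.
have memE (a b y : R) : (`[a, b] : set R) y = (a <= y <= b) by rewrite /= in_itv.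
have /andP[up pw] : u <= p <= w by rewrite -memE -E memE lexx pq.
have /andP[uq qw] : u <= q <= w by rewrite -memE -E memE lexx pq.
have /andP[pu uq'] : p <= u <= q by rewrite -memE E memE lexx (le_trans up pw).
have /andP[pw' wq] : p <= w <= q by rewrite -memE E memE lexx (le_trans up pw).
by split; apply/eqP; rewrite eq_le ?up ?pu ?qw ?wq.
Qed.

Lemma affine_image_endpoints h al be s c u w : al < be -> s != 0 ->
  (forall t, al <= t <= be -> h t = s * t + c) ->
  h @` `[al, be] = `[u, w] ->
  (0 < s -> h al = u /\ h be = w) /\ (s < 0 -> h al = w /\ h be = u).
Proof.
move=> al_be s_neq0 hE img.
have ha : h al = s * al + c by rewrite hE // lexx ltW.
have hb : h be = s * be + c by rewrite hE // lexx ltW.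
have min_le_max : Num.min (h al) (h be) <= Num.max (h al) (h be).
  by rewrite ge_min !le_max !lexx.
have := affine_image_itv (ltW al_be) s_neq0 hE.
rewrite img => /esym /(itv_cc_inj min_le_max) [<- <-]; split => s_sgn.
- have le_ab : h al <= h be by rewrite ha hb; nra.
  by rewrite (min_idPl le_ab) (max_idPr le_ab).
- have le_ba : h be <= h al by rewrite ha hb; nra.
  by rewrite (min_idPr le_ba) (max_idPl le_ba).
Qed.

Lemma affine_pullback_subdivision h al be s c (k : nat) (e : nat -> R)
    (rev : bool) :
  al <= be -> (forall m, (m < k)%N -> e m < e m.+1) ->
  (if rev then s < 0 else 0 < s) ->
  (forall t, al <= t <= be -> h t = s * t + c) ->
  h al = e (if rev then k else 0%N) -> h be = e (if rev then 0%N else k) ->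
  exists a : nat -> R, a 0%N = al /\ a k = be /\
    (forall m, (m < k)%N -> a m < a m.+1) /\
    forall m : 'I_k, (forall t, a m <= t <= a m.+1 -> h t = s * t + c) /\
      let i := if rev then (k - m.+1)%N else val m in
      h @` `[a m, a m.+1] = `[e i, e i.+1].
Proof.
move=> al_be e_inc s_sgn hE h_al h_be.
have s_neq0 : s != 0.
  by case: rev s_sgn {h_al h_be} => s_sgn; [rewrite ltr0_neq0 | rewrite lt0r_neq0].
have [idx idxE] : {idx : nat -> nat |
    forall m, idx m = if rev then (k - m)%N else m} by eexists.
pose a m := (e (idx m) - c) / s.
have aE m : s * a m + c = e (idx m) by rewrite /a; field.
have a_inc m : (m < k)%N -> a m < a m.+1.
  move=> mk; have := aE m; have := aE m.+1; rewrite !idxE.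
  case: rev s_sgn {h_al h_be idxE} => s_sgn E1 E0.
  - have /e_inc : (k - m.+1 < k)%N by lia.
    by rewrite subnSK // -E0 -E1 => ?; nra.
  - by have := e_inc _ mk; rewrite -E0 -E1 => ?; nra.
have a_le i j : (i <= j <= k)%N -> a i <= a j.
  move=> /andP[]; elim: j => [|j IH]; first by rewrite leqn0 => /eqP ->.
  rewrite leq_eqVlt => /orP[/eqP -> // | ij] jk.
  exact: le_trans (IH ij (ltnW jk)) (ltW (a_inc _ jk)).
have a0 : a 0%N = al.
  apply: (mulfI s_neq0); apply: (addIr c).
  by rewrite aE -hE ?lexx ?al_be // h_al idxE; case: (rev); rewrite ?subn0.
have ak : a k = be.
  apply: (mulfI s_neq0); apply: (addIr c).
  by rewrite aE -hE ?lexx ?al_be // h_be idxE; case: (rev); rewrite ?subnn.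
exists a; do 3!split => //; move=> m.
have hEm t : a m <= t <= a m.+1 -> h t = s * t + c.
  move=> /andP[t_ge t_le]; apply: hE; rewrite -a0 -ak.
  have m_le : (0 <= m <= k)%N by rewrite leq0n ltnW.
  have m1_le : (m.+1 <= k <= k)%N by rewrite ltn_ord leqnn.
  by rewrite (le_trans (a_le _ _ m_le) t_ge) (le_trans t_le (a_le _ _ m1_le)).
split => //.
have /ltW am_le := a_inc _ (ltn_ord m).
rewrite (affine_image_itv am_le s_neq0 hEm) !hEm ?lexx ?am_le // !aE !idxE.
case: (rev) s_sgn => s_sgn.
- rewrite -(subnSK (ltn_ord m)).
  have /e_inc /ltW le_e : (k - m.+1 < k)%N by have := ltn_ord m; lia.
  by rewrite (min_idPr le_e) (max_idPl le_e).
- have /ltW le_e := e_inc _ (ltn_ord m).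
  by rewrite (min_idPl le_e) (max_idPr le_e).
Qed.
End AffineBranches.

Lemma map_mx_natr_mul (T : pzSemiRingType) k l m (X : 'M[nat]_(k, l))
    (Y : 'M[nat]_(l, m)) :
  map_mx (fun a : nat => (a%:R : T)) (X *m Y) =
  map_mx (fun a : nat => a%:R) X *m map_mx (fun a : nat => a%:R) Y.
Proof.
apply/matrixP => i j; rewrite !mxE natr_sum.
by apply: eq_bigr => l' _; rewrite !mxE natrM.
Qed.

Section SwappedProducts.
Variables (k m : nat).

Lemma mulmx_swap_expS (T : pzSemiRingType) (B : 'M[T]_(k, m)) (C : 'M[T]_(m, k))
    (K : nat) :
  (B *m C) ^+ K.+1 = B *m (C *m B) ^+ K *m C.
Proof.
elim: K => [|K IH]; first by rewrite expr1 expr0 mulmx1.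
by rewrite exprS IH -mulmxE [(C *m B) ^+ K.+1]exprS -mulmxE !mulmxA.
Qed.

Lemma leq_mulmx3_entry (B : 'M[nat]_(k, m)) (X : 'M[nat]_m) (C : 'M[nat]_(m, k))
    q i j p :
  (B q i * X i j * C j p <= (B *m X *m C) q p)%N.
Proof.
rewrite !mxE (bigD1 j) //= !mxE (bigD1 i) //=.
by rewrite mulrDl -addrA; apply: leq_addr.
Qed.

Lemma aperiodic_mulmx_swap (B : 'M[nat]_(k, m)) (C : 'M[nat]_(m, k)) :
  (forall q, exists i, 0 < B q i)%N -> (forall p, exists i, 0 < C i p)%N ->
  aperiodic (C *m B) -> aperiodic (B *m C).
Proof.
move=> B_row C_col [K CB_pos]; exists K.+1 => q p.
have [i Bqi] := B_row q; have [j Cjp] := C_col p.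
rewrite mulmx_swap_expS; apply: leq_trans (leq_mulmx3_entry _ _ _ q i j p).
by rewrite !muln_gt0 Bqi Cjp CB_pos.
Qed.
End SwappedProducts.

Lemma eigenvalue_mulmx_swap (F : fieldType) k m (B : 'M[F]_(k, m)) (C : 'M[F]_(m, k))
    (mu : F) :
  mu != 0 -> eigenvalue (B *m C) mu -> eigenvalue (C *m B) mu.
Proof.
move=> mu_neq0 /eigenvalueP [u uBC u_neq0]; apply/eigenvalueP.
exists (u *m B); first by rewrite mulmxA -(mulmxA u) uBC scalemxAl.
apply: contraNneq u_neq0 => uB0.
by move: uBC; rewrite mulmxA uB0 mul0mx => /esym /eqP; rewrite scaler_eq0 (negbTE mu_neq0).
Qed.

Section Leading.
Variable R : realType.
Local Notation natC := (fun a : nat => (a%:R : R[i])).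

Lemma nonsingular_eigenvalue_neq0 l (A : 'M[nat]_l) (mu : R[i]) :
  nonsingular A -> eigenvalue (map_mx natC A) mu -> mu != 0.
Proof.
move=> A_ns /eigenvalueP [u uA u_neq0]; apply: contraNneq A_ns => mu0.
have : \det (map_mx natC A) == 0.
  by apply/det0P; exists u; rewrite // uA mu0 scale0r.
have -> : map_mx natC A = map_mx intr (map_mx (fun a : nat => a%:Z) A).
  by apply/matrixP => i j; rewrite !mxE -pmulrn.
by rewrite det_map_mx intr_eq0.
Qed.

Lemma leading_eigenvalue_mulmx_swap k m (B : 'M[nat]_(k, m)) (C : 'M[nat]_(m, k))
    (lam : R) :
  nonsingular (C *m B) -> leading_eigenvalue (C *m B) lam ->
  leading_eigenvalue (B *m C) lam.
Proof.
move=> CB_ns [lam_eig lam_max].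
have lam_neq0 := nonsingular_eigenvalue_neq0 CB_ns lam_eig.
rewrite map_mx_natr_mul in lam_eig lam_max.
split; first by rewrite map_mx_natr_mul; exact: eigenvalue_mulmx_swap lam_neq0 lam_eig.
move=> mu; rewrite map_mx_natr_mul => mu_eig.
have [->|mu_neq0] := eqVneq mu 0.
  by rewrite normr0; apply: le_trans (lam_max _ lam_eig).
exact: lam_max _ (eigenvalue_mulmx_swap mu_neq0 mu_eig).
Qed.

Lemma leading_eigenvalue_gt0 l (A : 'M[nat]_l) (lam : R) :
  nonsingular A -> leading_eigenvalue A lam -> 0 < lam.
Proof.
move=> A_ns [lam_eig lam_max].
have lam_neq0 := nonsingular_eigenvalue_neq0 A_ns lam_eig.
have : 0 <= lam%:C%C by apply: le_trans (lam_max _ lam_eig).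
by rewrite lecR le0r => /orP[/eqP lam0|//]; rewrite lam0 eqxx in lam_neq0.
Qed.
End Leading.

Definition incidence k m (f : 'I_k -> 'I_m) : 'M[nat]_(k, m) :=
  \matrix_(q, i) (f q == i : nat).

Lemma incidence_mul_tr k m (f g : 'I_k -> 'I_m) :
  incidence f *m (incidence g)^T = \matrix_(q, p) (f q == g p : nat).
Proof.
apply/matrixP => q p; rewrite !mxE (bigD1 (f q)) //= !mxE eqxx mul1r.
rewrite big1 ?addr0 => [|i /negbTE fq_i]; first by rewrite eq_sym.
by rewrite !mxE eq_sym fq_i.
Qed.

Lemma tr_incidence_mul k m (f g : 'I_k -> 'I_m) :
  (incidence g)^T *m incidence f =
  \matrix_(i, j) #|[pred p | (g p == i) && (f p == j)]|.
Proof.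
apply/matrixP => i j; rewrite !mxE -sum1_card [RHS]big_mkcond /=.
by apply: eq_bigr => p _; rewrite !mxE inE; case: (g p == i); case: (f p == j).
Qed.

Lemma incidence_gt0 k m (f : 'I_k -> 'I_m) q : (0 < incidence f q (f q))%N.
Proof. by rewrite mxE eqxx. Qed.

Section Concatenation.
Variables (n : nat) (r : 'I_n.+1 -> nat).

Definition offset (l : nat) : nat := (\sum_(j < n.+1 | j < l) r j)%N.
Definition npieces : nat := offset n.+1.
Definition piece_col (p : nat) : 'I_n.+1 :=
  odflt ord0 [pick j : 'I_n.+1 | offset j <= p < offset j.+1]%N.
Definition piece_index (p : nat) : nat := (p - offset (piece_col p))%N.

Lemma prefix_sumS (V : nmodType) (F : 'I_n.+1 -> V) (j : 'I_n.+1) :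
  \sum_(i < n.+1 | (i < j.+1)%N) F i = \sum_(i < n.+1 | (i < j)%N) F i + F j.
Proof.
rewrite (bigD1 j) //= addrC; congr (_ + _); apply: eq_bigl => i.
by rewrite ltnS leq_eqVlt val_eqE; case: eqVneq => [->|]; rewrite ?ltnn ?andbT.
Qed.

Lemma offset0 : offset 0 = 0%N.
Proof. by rewrite /offset big_pred0. Qed.

Lemma offsetS (j : 'I_n.+1) : offset j.+1 = (offset j + r j)%N.
Proof. exact: (prefix_sumS (V := nat)). Qed.

Lemma leq_offset l1 l2 : (l1 <= l2)%N -> (offset l1 <= offset l2)%N.
Proof.
move=> l12; apply: (sub_le_big leqnn (fun x y => leq_addr y x)) => j.
by move=> /leq_trans; apply.
Qed.

Lemma offset_le_npieces l : (offset l <= npieces)%N.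
Proof. exact: (sub_le_big leqnn (fun x y => leq_addr y x)). Qed.

Lemma piece_col_eq (j : 'I_n.+1) p :
  (offset j <= p < offset j.+1)%N -> piece_col p = j.
Proof.
have uniq_col (j' : 'I_n.+1) : (offset j <= p < offset j.+1)%N ->
    (offset j' <= p < offset j'.+1)%N -> j' = j.
  move=> /andP[jp pj] /andP[j'p pj']; apply: val_inj.
  by case: (ltngtP j j') => // lt; have := leq_offset lt; lia.
move=> p_j; rewrite /piece_col; case: pickP => [j' /uniq_col -> //| none].
by have := none j; rewrite p_j.
Qed.

Lemma piece_col_spec p : (p < npieces)%N ->
  (offset (piece_col p) <= p < offset (piece_col p).+1)%N.
Proof.
have col_exists l : (l <= n.+1)%N -> (p < offset l)%N ->
    exists j : 'I_n.+1, (offset j <= p < offset j.+1)%N.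
  elim: l => [|l IH] ln1; first by rewrite offset0.
  case: (ltnP p (offset l)) => [/(IH (ltnW ln1)) //|lp pl].
  by exists (Ordinal ln1); rewrite /= lp.
by case/(col_exists _ (leqnn _)) => j p_j; rewrite (piece_col_eq p_j).
Qed.

Lemma piece_colE p (j : 'I_n.+1) : (p < npieces)%N ->
  (piece_col p == j) = (offset j <= p < offset j.+1)%N.
Proof.
move=> pn; apply/eqP/idP => [<-|]; first exact: piece_col_spec.
exact: piece_col_eq.
Qed.

Lemma piece_col_offset (j : 'I_n.+1) l : (l < r j)%N -> piece_col (offset j + l) = j.
Proof. by move=> lr; apply: piece_col_eq; rewrite offsetS leq_addr ltn_add2l. Qed.

Lemma offset_add_lt_npieces (j : 'I_n.+1) l : (l < r j)%N -> (offset j + l < npieces)%N.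
Proof.
by move=> lr; apply: leq_trans (offset_le_npieces j.+1); rewrite offsetS ltn_add2l.
Qed.

Lemma big_piece_col (T : Type) (idx : T) (op : Monoid.law idx) (F : nat -> T)
    (j : 'I_n.+1) :
  \big[op/idx]_(p < npieces | piece_col p == j) F p =
  \big[op/idx]_(l < r j) F (offset j + l)%N.
Proof.
rewrite big_mkcond /= -(big_mkord xpredT (fun p => if piece_col p == j then F p else idx)).
rewrite (big_cat_nat (leq0n (offset j)) (offset_le_npieces j)) /=.
rewrite (big_cat_nat (leq_offset (leqnSn j)) (offset_le_npieces j.+1)) /=.
rewrite [X in op X _]big1_seq ?Monoid.mul1m => [|p /andP[_]]; last first.
  rewrite mem_index_iota => /andP[_ pj].
  rewrite piece_colE; last exact: leq_trans pj (offset_le_npieces j).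
  by rewrite leqNgt pj.
rewrite [X in op _ X]big1_seq ?Monoid.mulm1 => [|p /andP[_]]; last first.
  by rewrite mem_index_iota => /andP[jp pn]; rewrite piece_colE // ltnNge jp andbF.
rewrite big_nat_cond (eq_bigr F) -?big_nat_cond; last first.
  move=> p /andP[p_j _]; rewrite piece_colE ?p_j //.
  by case/andP: p_j => _ /leq_trans; apply; apply: offset_le_npieces.
rewrite -{1}(add0n (offset j)) big_addn offsetS addKn big_mkord.
by apply: eq_bigr => l _; rewrite addnC.
Qed.
End Concatenation.

Section Knots.
Variables (R : realType) (n : nat) (r : 'I_n.+1 -> nat) (a : 'I_n.+1 -> nat -> R)
  (v : 'rV[R]_n.+1).
Let x (k : nat) : R := \sum_(i < n.+1 | (i < k)%N) v 0 i.
Hypothesis v_gt0 : forall i, 0 < v 0 i.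
Hypothesis v_sum1 : \sum_(i < n.+1) v 0 i = 1.
Hypothesis a_first : forall j, a j 0%N = x j.
Hypothesis a_last : forall j, a j (r j) = x j.+1.
Hypothesis a_inc : forall j l, (l < r j)%N -> a j l < a j l.+1.

(* Past the last piece, [knot] stays at the right end 1. *)
Definition knot (p : nat) : R :=
  if (p < npieces r)%N then a (piece_col r p) (piece_index r p) else 1.

Lemma r_gt0 j : (0 < r j)%N.
Proof.
rewrite lt0n; apply/negP => /eqP rj0.
have := a_last j; rewrite rj0 a_first /x prefix_sumS => x_eq.
by have := v_gt0 j; lra.
Qed.

Lemma x_last : x n.+1 = 1.
Proof. by rewrite /x -v_sum1; apply: eq_bigl => i; rewrite ltn_ord. Qed.

Lemma knot_offset (j : 'I_n.+1) l : (l <= r j)%N -> knot (offset r j + l) = a j l.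
Proof.
have knot_in (i : 'I_n.+1) l' : (l' < r i)%N -> knot (offset r i + l') = a i l'.
  by move=> lr; rewrite /knot offset_add_lt_npieces // /piece_index piece_col_offset // addKn.
rewrite leq_eqVlt => /orP[/eqP -> | ]; last exact: knot_in.
rewrite -offsetS a_last; case: (ltnP j.+1 n.+1) => [jn | nj].
  by rewrite -(addn0 (offset r j.+1)) -[j.+1]/(val (Ordinal jn)) knot_in ?r_gt0 ?a_first.
have -> : j.+1 = n.+1 by apply/eqP; rewrite eqn_leq nj ltn_ord.
by rewrite /knot ltnn x_last.
Qed.

Lemma knot_offset_first (j : 'I_n.+1) : knot (offset r j) = x j.
Proof. by rewrite -[offset r j]addn0 knot_offset. Qed.

Lemma knot_offset_last (j : 'I_n.+1) : knot (offset r j.+1) = x j.+1.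
Proof. by rewrite offsetS knot_offset. Qed.

Lemma knot0 : knot 0 = 0.
Proof.
by have := knot_offset_first ord0; rewrite /= offset0 /x big_pred0.
Qed.

Lemma knot_npieces : knot (npieces r) = 1.
Proof. by rewrite /knot ltnn. Qed.

Lemma knot_lt p : (p < npieces r)%N -> knot p < knot p.+1.
Proof.
move=> /piece_col_spec; set j := piece_col r p; rewrite offsetS => /andP[jp pj].
by rewrite -(subnKC jp) -addnS !knot_offset ?a_inc //; lia.
Qed.

Lemma knot_inj : {in [pred p | p <= npieces r]%N &, injective knot}.
Proof.
apply: inc_inj_in; apply: Order.NatMonotonyTheory.incn_inP => [p q _ q_le k /andP[_ kq]|p _].
  exact: leq_trans (ltnW kq) q_le.
exact: knot_lt.
Qed.

Section PieceMatrix.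
Variables (h : R -> R) (lam : R) (tgt : forall j : 'I_n.+1, 'I_(r j) -> 'I_n.+1).
Hypothesis lam_gt0 : 0 < lam.
Hypothesis branch_affine : forall j (l : 'I_(r j)), exists s c : R,
  (s = lam \/ s = - lam) /\ (forall t, a j l <= t <= a j l.+1 -> h t = s * t + c) /\
  h @` `[a j l, a j l.+1] = `[x (tgt l), x (tgt l).+1].

Definition piece_tgt (p : nat) : 'I_n.+1 :=
  oapp (@tgt (piece_col r p)) ord0 (insub (piece_index r p)).

Lemma piece_index_lt p : (p < npieces r)%N -> (piece_index r p < r (piece_col r p))%N.
Proof. by move=> /piece_col_spec; rewrite offsetS /piece_index; lia. Qed.

Lemma piece_branch p : (p < npieces r)%N ->
  let t := piece_tgt p in
  exists (c : R) (rev : bool),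
    (forall u, knot p <= u <= knot p.+1 -> h u = (if rev then - lam else lam) * u + c) /\
    h (knot p) = knot (offset r t + (if rev then r t else 0%N)) /\
    h (knot p.+1) = knot (offset r t + (if rev then 0%N else r t)).
Proof.
move=> pn t; have l_lt := piece_index_lt pn.
have p_split : p = (offset r (piece_col r p) + piece_index r p)%N.
  by rewrite subnKC //; case/andP: (piece_col_spec pn).
have [s [c [s_lam [hE img]]]] := branch_affine (Ordinal l_lt).
have t_tgt : t = tgt (Ordinal l_lt) by rewrite /t /piece_tgt insubT.
rewrite p_split -addnS !knot_offset ?(ltnW l_lt) //.
have s_neq0 : s != 0 by case: s_lam => ->; rewrite ?oppr_eq0 gt_eqF.
have [pos neg] := affine_image_endpoints (a_inc l_lt) s_neq0 hE img.
rewrite -t_tgt in pos neg.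
have knot_t0 : knot (offset r t + 0) = x t by rewrite addn0 knot_offset_first.
have knot_tr : knot (offset r t + r t) = x t.+1 by rewrite -offsetS knot_offset_last.
case: s_lam => s_lam; rewrite s_lam in hE pos neg.
- by exists c, false; rewrite knot_t0 knot_tr; split => //; apply: pos.
- by exists c, true; rewrite knot_t0 knot_tr; split => //; apply: neg; rewrite oppr_lt0.
Qed.

Lemma piece_tgt_offset (j : 'I_n.+1) (l : 'I_(r j)) : piece_tgt (offset r j + l) = tgt l.
Proof. by rewrite /piece_tgt /piece_index piece_col_offset // addKn valK. Qed.

Definition piece_mx : 'M[nat]_(npieces r) :=
  \matrix_(q, p) (piece_col r q == piece_tgt p : nat).

Local Notation B := (incidence (fun q : 'I_(npieces r) => piece_col r q)).
Local Notation C := (incidence (fun p : 'I_(npieces r) => piece_tgt p))^T.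

Lemma piece_mx_factor : piece_mx = B *m C.
Proof. by rewrite incidence_mul_tr. Qed.

Variable M : 'M[nat]_n.+1.
Hypothesis tgt_count : forall j i, #|[pred l : 'I_(r j) | tgt l == i]| = M i j.

Lemma M_factor : C *m B = M.
Proof.
apply/matrixP => i j; rewrite tr_incidence_mul mxE -tgt_count -!sum1_card.
rewrite (eq_bigl (fun p : 'I__ => (piece_col r p == j) && (piece_tgt p == i))); last first.
  by move=> p; rewrite inE andbC.
rewrite big_mkcondr (big_piece_col _ _ (fun p => if piece_tgt p == i then 1 else 0)%N).
rewrite [RHS]big_mkcond.
by apply: eq_bigr => l _; rewrite piece_tgt_offset.
Qed.

Lemma piece_mx_aperiodic : aperiodic M -> aperiodic piece_mx.
Proof.
move=> M_ap; rewrite piece_mx_factor; apply: aperiodic_mulmx_swap; rewrite ?M_factor //.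
  by move=> q; exists (piece_col r q); apply: incidence_gt0.
by move=> p; exists (piece_tgt p); rewrite mxE incidence_gt0.
Qed.

Lemma piece_mx_leading_eigenvalue (mu : R) :
  nonsingular M -> leading_eigenvalue M mu -> leading_eigenvalue piece_mx mu.
Proof. by rewrite piece_mx_factor -M_factor; apply: leading_eigenvalue_mulmx_swap. Qed.

(* The map phi of the odd-block condition for [piece_mx]. *)
Definition knot_index (g : 'I_(npieces r).+1) : 'I_(npieces r).+1 :=
  odflt ord0 [pick y : 'I_(npieces r).+1 | knot y == h (knot g)].

Lemma knot_indexE (g : 'I_(npieces r).+1) y :
  (y <= npieces r)%N -> knot y = h (knot g) -> knot_index g = y :> nat.
Proof.
move=> yn y_h; rewrite /knot_index; case: pickP => [y' /eqP y'_h | none] /=.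
  by apply: knot_inj; rewrite ?inE ?y'_h // -ltnS.
by have := none (Ordinal (yn : (y < (npieces r).+1)%N)); rewrite /= y_h eqxx.
Qed.

Lemma piece_mx_odd_block : odd_block piece_mx.
Proof.
split=> [p i1 i i2 /andP[i1i ii2] | ].
  rewrite !mxE !eqb0 !negbK !piece_colE // => /andP[t_i1 _] /andP[_ i2_t].
  by rewrite (leq_trans t_i1 i1i) (leq_ltn_trans ii2 i2_t).
exists knot_index => q p; rewrite mxE oddb.
have [_ [rev [_ [h_p h_p1]]]] := piece_branch (ltn_ord p).
set t := piece_tgt p in h_p h_p1 *.
have t_le (b : bool) : (offset r t + (if b then r t else 0) <= npieces r)%N.
  by case: b; rewrite ?addn0 -?offsetS offset_le_npieces.
have phi_p : knot_index (inord p) = (offset r t + (if rev then r t else 0))%N :> nat.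
  by apply: knot_indexE; rewrite ?t_le // inordK ?h_p // leqW.
have phi_p1 : knot_index (inord p.+1) = (offset r t + (if rev then 0 else r t))%N :> nat.
  apply: knot_indexE; last by rewrite inordK ?h_p1 // ltnS.
  by have := t_le (~~ rev); case: (rev).
rewrite phi_p phi_p1 piece_colE // offsetS ltnS.
by case: (rev); rewrite ?addn0 ?(minn_idPl (leq_addr _ _)) ?(maxn_idPr (leq_addr _ _))
  ?(minn_idPr (leq_addr _ _)) ?(maxn_idPl (leq_addr _ _)).
Qed.

Definition piece_len : 'rV[R]_(npieces r) := \row_p (knot p.+1 - knot p).

Lemma prefix_sum_piece_len g : (g <= npieces r)%N ->
  \sum_(i < npieces r | (i < g)%N) piece_len 0 i = knot g.
Proof.
move=> gn; under eq_bigr do rewrite mxE.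
rewrite -(big_ord_widen _ (fun i => knot i.+1 - knot i) gn).
by rewrite -(big_mkord xpredT (fun i => knot i.+1 - knot i)) telescope_sumr // knot0 subr0.
Qed.

Lemma piece_len_eigen :
  piece_len *m map_mx (fun a : nat => (a%:R : R)) piece_mx = lam *: piece_len.
Proof.
apply/rowP => p; rewrite !mxE.
have [c [rev [hE [h_p h_p1]]]] := piece_branch (ltn_ord p).
set t := piece_tgt p in h_p h_p1 *.
transitivity (\sum_(q < npieces r | piece_col r q == t) (knot q.+1 - knot q)).
  rewrite [RHS]big_mkcond; apply: eq_bigr => q _; rewrite !mxE.
  by case: (_ == _); rewrite ?mulr1 ?mulr0.
rewrite (big_piece_col _ _ (fun q => knot q.+1 - knot q)).
under eq_bigr do rewrite -addnS.
rewrite -(big_mkord xpredT (fun l => knot (offset r t + l.+1) - knot (offset r t + l))).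
rewrite (telescope_sumr (fun l => knot (offset r t + l))) //.
have /ltW knot_le := knot_lt (ltn_ord p).
move: h_p h_p1; rewrite !hE ?lexx ?knot_le //.
by case: (rev); rewrite ?addn0 => <- <-; ring.
Qed.

Lemma piece_subdivision (p : 'I_(npieces r)) :
  exists (k : nat) (b : nat -> R) (tgt' : 'I_k -> 'I_(npieces r)),
    b 0%N = knot p /\ b k = knot p.+1 /\
    (forall l, (l < k)%N -> b l < b l.+1) /\
    (forall l : 'I_k, exists s c : R, (s = lam \/ s = - lam) /\
        (forall u, b l <= u <= b l.+1 -> h u = s * u + c) /\
        h @` `[b l, b l.+1] = `[knot (tgt' l), knot (tgt' l).+1]) /\
    (forall i, #|[pred l : 'I_k | tgt' l == i]| = piece_mx i p).
Proof.
have [c [rev [hE [h_p h_p1]]]] := piece_branch (ltn_ord p).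
set t := piece_tgt p in h_p h_p1 *.
set s := if rev then - lam else lam in hE.
have s_sgn : if rev then s < 0 else 0 < s by rewrite /s; case: (rev); rewrite ?oppr_lt0.
have tgt_lt l : (l < r t)%N -> (offset r t + l < npieces r)%N.
  exact: offset_add_lt_npieces.
have knot_inc l : (l < r t)%N -> knot (offset r t + l) < knot (offset r t + l.+1).
  by move=> lr; rewrite addnS knot_lt ?tgt_lt.
have [b [b0 [bk [b_inc b_branch]]]] := affine_pullback_subdivision
  (ltW (knot_lt (ltn_ord p))) knot_inc s_sgn hE h_p h_p1.
pose idx (l : 'I_(r t)) : nat := if rev then (r t - l.+1)%N else l.
have idx_lt l : (idx l < r t)%N by rewrite /idx; case: (rev); have := ltn_ord l; lia.
exists (r t), b, (fun l => Ordinal (tgt_lt _ (idx_lt l))); do 4!split => //.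
  move=> l; have [hEl img] := b_branch l; exists s, c.
  split; first by rewrite /s; case: (rev); [right | left].
  by split => //; move: img => /=; rewrite addnS.
move=> q; rewrite mxE piece_colE // offsetS.
have tgt'E l : (Ordinal (tgt_lt _ (idx_lt l)) == q) = (offset r t + idx l == q)%N.
  by rewrite -val_eqE.
case: (boolP (offset r t <= q < offset r t + r t)%N) => q_t /=.
- have l0_lt : ((if rev then r t - (q - offset r t).+1 else q - offset r t) < r t)%N.
    by move: q_t; case: (rev); lia.
  rewrite -(card1 (Ordinal l0_lt)); apply: eq_card => l.
  rewrite !inE tgt'E -val_eqE /= /idx.
  by have := ltn_ord l; move: q_t; case: (rev) => q_t l_lt; apply/eqP/eqP; lia.
- apply: eq_card0 => l; rewrite !inE tgt'E; apply/negP => /eqP q_l.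
  by move: q_t; rewrite -q_l leq_addr ltn_add2l idx_lt.
Qed.

Lemma piece_mx_realizes : nonsingular M -> leading_eigenvalue M lam ->
  {within `[0%R, 1%R], continuous h} -> (forall u, 0 <= u <= 1 -> 0 <= h u <= 1) ->
  realizes piece_mx h.
Proof.
move=> M_ns M_lead h_cont h_range; exists lam, piece_len.
split; first exact: piece_mx_leading_eigenvalue.
split; first by move=> q; rewrite mxE subr_gt0 knot_lt.
split; first exact: piece_len_eigen.
split.
  rewrite -knot_npieces -prefix_sum_piece_len //.
  by apply: eq_bigl => q; rewrite ltn_ord.
do 2!split => //; move=> x' p.
have x'E g : (g <= npieces r)%N -> x' g = knot g by exact: prefix_sum_piece_len.
have [k [b [tgt' [b0 [bk [b_inc [b_branch b_count]]]]]]] := piece_subdivision p.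
have x'_knot (q : 'I_(npieces r)) : x' q = knot q /\ x' q.+1 = knot q.+1.
  by rewrite !x'E // ltnW.
exists k, b, tgt'; rewrite !(x'_knot p).1 (x'_knot p).2.
do 3!(split; first done); split => // l.
have [s [c [s_lam [hE img]]]] := b_branch l.
by exists s, c; rewrite (x'_knot (tgt' l)).1 (x'_knot (tgt' l)).2.
Qed.
End PieceMatrix.
End Knots.

Lemma choice3_dep (I T : Type) (B : nat -> Type)
    (P : I -> forall k : nat, T -> B k -> Prop) :
  (forall i, exists k t (u : B k), P i k t u) ->
  exists (k : I -> nat) (t : I -> T) (u : forall i, B (k i)),
    forall i, P i (k i) (t i) (u i).
Proof.
move=> ex_P; pose kt i := cid (ex_P i); pose tu i := cid (svalP (kt i)).
exists (fun i => sval (kt i)), (fun i => sval (tu i)).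
by exists (fun i => sval (cid (svalP (tu i)))) => i; apply: svalP (cid (svalP (tu i))).
Qed.

Theorem theorem2 (R : realType) (n : nat) (M : 'M[nat]_n) (h : R -> R) :
  nonsingular M -> aperiodic M -> odd_block M -> realizes M h ->
  exists (k : nat) (N : 'M[nat]_k),
    aperiodic N /\ odd_block N /\ (forall i j : 'I_k, N i j <= 1)%N /\
    realizes N h /\
    (forall lam : R, leading_eigenvalue M lam -> leading_eigenvalue N lam).
Proof.
move=> M_ns M_ap _ [lam [v [M_lead [v_gt0 [_ [v_sum1 [h_cont [h_range cols]]]]]]]].
have lam_gt0 := leading_eigenvalue_gt0 M_ns M_lead.
case: n M M_ns M_ap M_lead v v_gt0 v_sum1 cols => [|n] M M_ns M_ap M_lead v v_gt0 v_sum1 cols.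
  by case: M_lead => /eigenvalueP [u _]; rewrite thinmx0 eqxx.
have [r [a [tgt col_spec]]] := choice3_dep cols.
have a_first j := (col_spec j).1.
have a_last j := (col_spec j).2.1.
have a_inc j := (col_spec j).2.2.1.
have branch_affine j := (col_spec j).2.2.2.1.
have tgt_count j := (col_spec j).2.2.2.2.
exists (npieces r), (piece_mx tgt).
split; first exact: piece_mx_aperiodic tgt_count M_ap.
split; first exact: (piece_mx_odd_block v_gt0 v_sum1 a_first a_last a_inc lam_gt0 branch_affine).
split; first by move=> q p; rewrite mxE leq_b1.
split; first exact: (piece_mx_realizes v_gt0 v_sum1 a_first a_last a_inc lam_gt0 branch_affine tgt_count).
by move=> mu; exact: (@piece_mx_leading_eigenvalue R _ _ _ _ tgt_count mu M_ns).
Qed.
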